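(* Let $(K,D,v)$ be a VD-field such that $(K,v)$ is spherically complete and the residue field $Kv$ is linearly $D$-closed. Let $f\in\mathcal{O}[X_0,X_1,\dots,X_n]$ and assume there is $b\in\mathcal{O}$ such that $$\gamma:=\min_{0\le i\le n} v\frac{\partial f}{\partial X_i}(b,Db,\dots,D^nb)<\infty\quad\text{and}\quad vf(b,Db,\dots,D^nb)>2\gamma.$$ Then there is $a\in K$ such that $f(a,Da,\dots,D^na)=0$ and $v(a-b)>\gamma$.
   Context: $(K,v)$ is a valued field with valuation ring $\mathcal{O}=\{y:vy\ge0\}$, valuation ideal $\mathcal{M}=\{y:vy>0\}$, residue field $Kv=\mathcal{O}/\mathcal{M}$, value group $vK$. $(K,v)$ is spherically complete if the ultrametric space $(K,u)$ with $u(a,b)=v(a-b)$ is spherically complete, i.e. every family of balls $\{x: v(x-c)\ge\alpha\}$ (or unions of such with a common point) totally ordered by inclusion has non-empty intersection. A VD-field is a valued field $(K,v)$ with an additive map $D:K\to K$ such that: (VDF1) $vDa\ge va$ for all $a\in K$; (VDF2) $vK=\{va\mid a\in K,\ vDa>va\}$; (VDF3) there is $e\in\mathcal{O}$ with $D(ab)=aDb+bDa+e(Da)(Db)$ for all $a,b\in K$. By (VDF1), $D$ induces an additive map on $Kv$, again denoted $D$, with $D(av)=(Da)v$ for $a\in\mathcal{O}$. $D^i$ denotes the $i$-th iterate ($D^0=\mathrm{id}$). $Kv$ is linearly $D$-closed if every operator $\sum_{i=0}^n c_iD^i$ with $c_i\in Kv$ is surjective on $Kv$. *)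

From mathcomp Require Import all_boot all_algebra.
From mathcomp Require Import mpoly.

Set Implicit Arguments.
Unset Strict Implicit.
Unset Printing Implicit Defensive.

Import GRing.Theory.
Local Open Scope ring_scope.

Definition is_oag (G : zmodType) (le : rel G) : Prop :=
  [/\ reflexive le, antisymmetric le, transitive le, total le
    & forall x y z : G, le x y -> le (x + z) (y + z)].

(* A (Krull) valuation v : K -> G, where v 0 = "infinity" is left implicit:
   v is only meaningful on nonzero elements; G is the value group vK
   (v is surjective from K^x onto G). *)
Definition is_valuation (K : fieldType) (G : zmodType) (le : rel G)
  (v : K -> G) : Prop :=
  [/\ is_oag le,
      forall x y : K, x != 0 -> y != 0 -> v (x * y) = v x + v y,
      forall x y : K, x != 0 -> y != 0 -> x + y != 0 ->
         le (v x) (v (x + y)) \/ le (v y) (v (x + y))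
    & forall g : G, exists2 x : K, x != 0 & v x = g].

Section ValuedField.
Variables (K : fieldType) (G : zmodType) (le : rel G) (v : K -> G).

Definition lt_ (a b : G) := (a != b) && le a b.

Definition vge (x : K) (g : G) : bool := (x == 0) || le g (v x).
Definition vgt (x : K) (g : G) : bool := (x == 0) || lt_ g (v x).
Definition vle (x y : K) : bool := (y == 0) || ((x != 0) && le (v x) (v y)).
Definition vlt (x y : K) : bool := (x != 0) && ((y == 0) || lt_ (v x) (v y)).

Definition vring (x : K) : bool := (x == 0) || le 0 (v x).
Definition videal (x : K) : bool := (x == 0) || lt_ 0 (v x).

(* Balls: {x : v(x - c) >= a} and unions of such balls having a common point,
   i.e. sets {x : x = c or v(x - c) \in L} with L a nonempty final segment
   of G. *)
Definition ball (c : K) (L : pred G) : pred K :=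
  fun x => (x == c) || L (v (x - c)).

Definition final_segment (L : pred G) : Prop :=
  (exists g, L g) /\ forall g h, L g -> le g h -> L h.

Definition spherically_complete : Prop :=
  forall (I : Type) (c : I -> K) (L : I -> pred G),
    (forall i, final_segment (L i)) ->
    (forall i j, {subset ball (c i) (L i) <= ball (c j) (L j)} \/
                 {subset ball (c j) (L j) <= ball (c i) (L i)}) ->
    exists x : K, forall i, ball (c i) (L i) x.

Definition is_VD (D : K -> K) : Prop :=
  [/\ forall x y, D (x + y) = D x + D y,
      forall a : K, vle a (D a),
      forall a : K, a != 0 -> exists b : K, [/\ b != 0, v b = v a & vlt b (D b)]
    & exists2 e : K, vring e &
        forall a b : K, D (a * b) = a * D b + b * D a + e * D a * D b].

(* The residue field Kv = O/M is linearly D-closed: every nonzero operator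
   sum_{i<=m} c_i D^i with c_i in Kv is surjective on Kv.  Written out on
   representatives: c_i in O, not all in M; for every y in O there is x in O
   with sum_i c_i D^i x - y in M. *)
Definition residue_linearly_D_closed (D : K -> K) : Prop :=
  forall (m : nat) (c : 'I_m.+1 -> K),
    (forall i, vring (c i)) -> (exists i, ~~ videal (c i)) ->
    forall y : K, vring y ->
      exists2 x : K, vring x &
        videal (\sum_(i < m.+1) c i * iter i D x - y).

End ValuedField.

Definition jet (K : fieldType) (D : K -> K) (n : nat) (a : K) : 'I_n.+1 -> K :=
  fun i => iter i D a.
Arguments jet {K} D n a.

From mathcomp Require Import all_boot all_algebra.
From mathcomp Require Import mpoly.
From mathcomp Require Import ring.
From Stdlib Require Import Classical.
From mathcomp Require classical_sets.

(* Newton's method, made transfinite by spherical completeness.  Call c an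
   approximation if v(c - b) > γ and v f(c) > 2γ, and say that t refines s if
   v f(s) <= v f(t) and v(t - s) >= v f(s) - γ.  By a second-order Taylor
   estimate at the jets, the balls B(s, v f(s) - γ) of a chain of
   approximations are nested and any point in their intersection is an
   approximation refining the whole chain; so Zorn's lemma gives a maximal
   approximation c.  If f(c) were nonzero, pick t with v t = v f(c) - γ and
   v(Dt) > v t: then D^i(t x) = t D^i x up to terms of value > v t, so the
   linear part of f(c + t x) - f(c) is t d L(x), with d = ∂_{i0} f(b) of value
   γ and L = Σ_i (∂_i f(c) / d) D^i an operator whose residue has a unit
   coefficient.  Solving L(x) = -f(c) / (t d) in Kv yields a refinement
   c + t x of c with v f(c + t x) > v f(c), contradicting maximality. *)

Set Implicit Arguments.
Unset Strict Implicit.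
Unset Printing Implicit Defensive.
Import GRing.Theory.
Local Open Scope ring_scope.

Section OrderedGroup.
Variables (G : zmodType) (le : rel G).
Hypothesis ho : is_oag le.
Local Notation lt := (lt_ le).

Lemma oag_refl x : le x x. Proof. by case: ho. Qed.

Lemma oag_trans x y z : le x y -> le y z -> le x z.
Proof. by case: ho => _ _ t _ _; exact: t. Qed.

Lemma oag_anti x y : le x y -> le y x -> x = y.
Proof. by case: ho => _ a _ _ _ h1 h2; apply: a; rewrite h1 h2. Qed.

Lemma oag_total x y : le x y || le y x.
Proof. by case: ho => _ _ _ t _; exact: t. Qed.

Lemma oag_leDr x y z : le x y -> le (x + z) (y + z).
Proof. by case: ho => _ _ _ _ h; exact: h. Qed.

Lemma oag_leD a b c d : le a b -> le c d -> le (a + c) (b + d).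
Proof.
move=> hab hcd; apply: oag_trans (oag_leDr c hab) _.
by rewrite ![b + _]addrC; exact: oag_leDr.
Qed.

Lemma oag_ltW a b : lt a b -> le a b. Proof. by case/andP. Qed.

Lemma oag_ltxx a : lt a a = false. Proof. by rewrite /lt_ eqxx. Qed.

Lemma oag_le_ltF a b : le a b -> lt b a -> False.
Proof. by move=> h /andP[/negP ne h2]; apply: ne; apply/eqP/oag_anti. Qed.

Lemma oag_lt_le_trans a b c : lt a b -> le b c -> lt a c.
Proof.
move=> h1 h2; apply/andP; split; last exact: oag_trans (oag_ltW h1) h2.
by apply/negP => /eqP E; subst c; exact: oag_le_ltF h2 h1.
Qed.

Lemma oag_ltDr a b z : lt a b -> lt (a + z) (b + z).
Proof.
move=> /andP[ne h]; apply/andP; split; last exact: oag_leDr.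
by apply: contra ne => /eqP /addIr ->.
Qed.

Lemma oag_lt_leD a b c d : lt a b -> le c d -> lt (a + c) (b + d).
Proof.
move=> hab hcd; apply: oag_lt_le_trans (oag_ltDr c hab) _.
by rewrite ![b + _]addrC; exact: oag_leDr.
Qed.

Lemma oag_le_double g : le 0 g -> le g (g + g).
Proof. by move=> h; have := oag_leDr g h; rewrite add0r. Qed.

Lemma oag_double_eq0 (g : G) : g + g = 0 -> g = 0.
Proof.
move=> E; case/orP: (oag_total 0 g) => h; apply: oag_anti => //;
  by have := oag_leDr g h; rewrite add0r E.
Qed.

End OrderedGroup.

Section Valuation.
Variables (K : fieldType) (G : zmodType) (le : rel G) (v : K -> G).
Hypothesis hv : is_valuation le v.
Local Notation ge := (vge le v).
Local Notation gt := (vgt le v).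
Local Notation lt := (lt_ le).

Lemma valuation_oag : is_oag le. Proof. by case: hv. Qed.
Let ho : is_oag le := valuation_oag.

Lemma vM x y : x != 0 -> y != 0 -> v (x * y) = v x + v y.
Proof. by case: hv => _ h _ _; exact: h. Qed.

Lemma v_surj g : exists2 x : K, x != 0 & v x = g.
Proof. by case: hv => _ _ _ h; exact: h. Qed.

Lemma v1 : v 1 = 0.
Proof.
have := vM (oner_neq0 K) (oner_neq0 K); rewrite mulr1 => E.
by apply: (addrI (v 1)); rewrite addr0.
Qed.

Lemma vN x : v (- x) = v x.
Proof.
have vN1 : v (-1) = 0.
  apply: (oag_double_eq0 ho); rewrite -vM ?oppr_eq0 ?oner_eq0 //.
  by rewrite mulrNN mulr1 v1.
have [->|nx] := eqVneq x 0; first by rewrite oppr0.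
by rewrite -mulN1r vM ?oppr_eq0 ?oner_eq0 // vN1 add0r.
Qed.

Lemma vV x : x != 0 -> v x^-1 = - v x.
Proof.
move=> nx; have := vM nx (invr_neq0 nx); rewrite mulfV // v1 => E.
by apply: (addrI (v x)); rewrite -E subrr.
Qed.

Lemma vgeE x g : x != 0 -> ge x g = le g (v x).
Proof. by rewrite /vge => /negbTE ->. Qed.

Lemma vgtE x g : x != 0 -> gt x g = lt g (v x).
Proof. by rewrite /vgt => /negbTE ->. Qed.

Lemma vge0 g : ge 0 g. Proof. by rewrite /vge eqxx. Qed.

Lemma vgt0 g : gt 0 g. Proof. by rewrite /vgt eqxx. Qed.

Lemma vge_v x : ge x (v x).
Proof. by have [->|nx] := eqVneq x 0; rewrite ?vge0 // vgeE // (oag_refl ho). Qed.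

Lemma vge1 : ge 1 0. Proof. by rewrite vgeE ?oner_eq0 // v1 (oag_refl ho). Qed.

Lemma vgeN x g : ge (- x) g = ge x g.
Proof. by rewrite /vge vN oppr_eq0. Qed.

Lemma vgtN x g : gt (- x) g = gt x g.
Proof. by rewrite /vgt vN oppr_eq0. Qed.

Lemma vgeD x y g : ge x g -> ge y g -> ge (x + y) g.
Proof.
have [->|nx] := eqVneq x 0; first by rewrite add0r.
have [->|ny] := eqVneq y 0; first by rewrite addr0.
have [->|nxy] := eqVneq (x + y) 0; first by rewrite vge0.
rewrite !vgeE // => hx hy; have [_ _ /(_ x y nx ny nxy) [] h _] := hv.
- exact: (oag_trans ho hx h).
- exact: (oag_trans ho hy h).
Qed.

Lemma vgtD x y g : gt x g -> gt y g -> gt (x + y) g.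
Proof.
have [->|nx] := eqVneq x 0; first by rewrite add0r.
have [->|ny] := eqVneq y 0; first by rewrite addr0.
have [->|nxy] := eqVneq (x + y) 0; first by rewrite vgt0.
rewrite !vgtE // => hx hy; have [_ _ /(_ x y nx ny nxy) [] h _] := hv.
- exact: (oag_lt_le_trans ho hx h).
- exact: (oag_lt_le_trans ho hy h).
Qed.

Lemma vgtB x y g : gt x g -> gt y g -> gt (x - y) g.
Proof. by move=> hx hy; apply: vgtD; rewrite ?vgtN. Qed.

Lemma vgtW x g : gt x g -> ge x g.
Proof. by rewrite /vgt /vge => /orP[->//|/oag_ltW ->]; rewrite orbT. Qed.

Lemma vge_mono x a b : le a b -> ge x b -> ge x a.
Proof. by rewrite /vge => h /orP[->//|h2]; rewrite (oag_trans ho h h2) orbT. Qed.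

Lemma vge_gt x a b : lt a b -> ge x b -> gt x a.
Proof.
by rewrite /vge /vgt => h /orP[->//|h2]; rewrite (oag_lt_le_trans ho h h2) orbT.
Qed.

Lemma vgeM x y a b : ge x a -> ge y b -> ge (x * y) (a + b).
Proof.
have [->|nx] := eqVneq x 0; first by move=> *; rewrite mul0r vge0.
have [->|ny] := eqVneq y 0; first by move=> *; rewrite mulr0 vge0.
by rewrite !vgeE ?mulf_neq0 // vM //; exact: (oag_leD ho).
Qed.

Lemma vgt_geM x y a b : gt x a -> ge y b -> gt (x * y) (a + b).
Proof.
have [->|nx] := eqVneq x 0; first by move=> *; rewrite mul0r vgt0.
have [->|ny] := eqVneq y 0; first by move=> *; rewrite mulr0 vgt0.
by rewrite vgtE // vgeE // vgtE ?mulf_neq0 // vM //; exact: (oag_lt_leD ho).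
Qed.

Lemma vge_gtM x y a b : ge x a -> gt y b -> gt (x * y) (a + b).
Proof. by move=> hx hy; rewrite mulrC addrC; exact: vgt_geM. Qed.

Lemma vgeM_ge0l x y a b : le 0 a -> ge x a -> ge y b -> ge (x * y) b.
Proof.
move=> ha hx hy; apply: vge_mono (vgeM hx hy).
by have := oag_leDr ho b ha; rewrite add0r.
Qed.

Lemma vgeM_ge0r x y a b : le 0 a -> ge x b -> ge y a -> ge (x * y) b.
Proof. by move=> ha hx hy; rewrite mulrC; exact: vgeM_ge0l hy hx. Qed.

Lemma vge0_div x y : y != 0 -> ge x (v y) -> ge (x / y) 0.
Proof.
move=> ny hx; rewrite -(subrr (v y)) -(vV ny).
exact: vgeM hx (vge_v _).
Qed.

Lemma vgt0_div x y : y != 0 -> gt x (v y) -> gt (x / y) 0.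
Proof.
move=> ny hx; rewrite -(subrr (v y)) -(vV ny).
exact: vgt_geM hx (vge_v _).
Qed.

Lemma ball_le c r x : ball v c (le r) x = ge (x - c) r.
Proof. by rewrite /ball /vge subr_eq0. Qed.

Lemma vge_sum (I : Type) (r : seq I) (F : I -> K) g :
  (forall i, ge (F i) g) -> ge (\sum_(i <- r) F i) g.
Proof.
by move=> hF; apply: (big_ind (ge^~ g)) => //; [exact: vge0 | move=> ? ?; exact: vgeD].
Qed.

Lemma vgt_sum (I : Type) (r : seq I) (F : I -> K) g :
  (forall i, gt (F i) g) -> gt (\sum_(i <- r) F i) g.
Proof.
by move=> hF; apply: (big_ind (gt^~ g)) => //; [exact: vgt0 | move=> ? ?; exact: vgtD].
Qed.

Lemma vge_muln x g k : ge x g -> ge (x *+ k) g.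
Proof.
by move=> hx; elim: k => [|k ih]; rewrite ?mulr0n ?vge0 // mulrS vgeD.
Qed.

End Valuation.

Lemma meval_mderivX (R : comNzRingType) (N : nat) (z : 'I_N -> R) (i j : 'I_N) :
  (mderiv i 'X_j).@[z] = (j == i)%:R.
Proof.
rewrite mderivX mevalZ mevalX mnm1E.
have [->|ne] := eqVneq j i; last by rewrite mul0r.
by rewrite mul1r big1 // => k _; rewrite mnmBE subnn expr0.
Qed.

Section Taylor.
Variables (K : fieldType) (G : zmodType) (le : rel G) (v : K -> G).
Hypothesis hv : is_valuation le v.
Variables (N : nat) (x h : 'I_N -> K) (g : G).
Hypotheses (hg : le 0 g) (hx : forall i, vge le v (x i) 0)
  (hh : forall i, vge le v (h i) g).
Local Notation ge := (vge le v).
Let ho := valuation_oag hv.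
Let le00 := oag_refl ho 0.
Let hg2 : le 0 (g + g) := oag_trans ho hg (oag_le_double ho hg).

Definition taylor_rem (p : {mpoly K[N]}) : K :=
  p.@[fun i => x i + h i] - p.@[x] - \sum_(i < N) (mderiv i p).@[x] * h i.

Definition taylor_bounded (p : {mpoly K[N]}) : Prop :=
  [/\ ge p.@[x] 0, forall i, ge (mderiv i p).@[x] 0 & ge (taylor_rem p) (g + g)].

Lemma taylor_remE p : p.@[fun i => x i + h i] =
  p.@[x] + \sum_(i < N) (mderiv i p).@[x] * h i + taylor_rem p.
Proof. by rewrite /taylor_rem; ring. Qed.

Lemma vge_linear_term p : (forall i, ge (mderiv i p).@[x] 0) ->
  ge (\sum_(i < N) (mderiv i p).@[x] * h i) g.
Proof.
by move=> hd; apply: (vge_sum hv) => i; exact: (vgeM_ge0l hv le00 (hd i) (hh i)).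
Qed.

Lemma taylor_boundedD p q :
  taylor_bounded p -> taylor_bounded q -> taylor_bounded (p + q).
Proof.
case=> p1 p2 p3 [q1 q2 q3]; split.
- by rewrite mevalD; exact: (vgeD hv).
- by move=> i; rewrite mderivD mevalD; exact: (vgeD hv).
suff -> : taylor_rem (p + q) = taylor_rem p + taylor_rem q by exact: (vgeD hv).
rewrite /taylor_rem !mevalD.
under eq_bigr => i _ do rewrite mderivD mevalD mulrDl.
by rewrite big_split /=; ring.
Qed.

Lemma taylor_boundedM p q :
  taylor_bounded p -> taylor_bounded q -> taylor_bounded (p * q).
Proof.
case=> p1 p2 p3 [q1 q2 q3]; split.
- by rewrite mevalM; exact: (vgeM_ge0l hv le00 p1 q1).
- move=> i; rewrite mderivM mevalD !mevalM.
  by apply: (vgeD hv); exact: (vgeM_ge0l hv le00 _ _).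
set A := \sum_(i < N) (mderiv i p).@[x] * h i.
set B := \sum_(i < N) (mderiv i q).@[x] * h i.
have hA : ge A g := vge_linear_term p2.
have hB : ge B g := vge_linear_term q2.
have Ep : p.@[fun i => x i + h i] = p.@[x] + A + taylor_rem p := taylor_remE p.
have Eq : q.@[fun i => x i + h i] = q.@[x] + B + taylor_rem q := taylor_remE q.
have -> : taylor_rem (p * q) = p.@[x] * taylor_rem q + A * B + A * taylor_rem q
    + taylor_rem p * q.@[x] + taylor_rem p * B + taylor_rem p * taylor_rem q.
  rewrite {1}/taylor_rem !mevalM Ep Eq.
  have -> : \sum_(i < N) (mderiv i (p * q)).@[x] * h i = q.@[x] * A + p.@[x] * B.
    rewrite /A /B !mulr_sumr -big_split /=; apply: eq_bigr => i _.
    by rewrite mderivM mevalD !mevalM; ring.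
  by ring.
repeat apply: (vgeD hv).
- exact: (vgeM_ge0l hv le00 p1 q3).
- exact: (vgeM hv hA hB).
- exact: (vgeM_ge0l hv hg hA q3).
- exact: (vgeM_ge0r hv le00 p3 q1).
- exact: (vgeM_ge0r hv hg p3 hB).
- exact: (vgeM_ge0r hv hg2 p3 q3).
Qed.

Lemma taylor_boundedC c : ge c 0 -> taylor_bounded c%:MP.
Proof.
move=> hc; split; rewrite ?mevalC //.
  by move=> i; rewrite mderivC meval0 vge0.
rewrite /taylor_rem !mevalC big1 ?subrr ?subr0 ?vge0 // => i _.
by rewrite mderivC meval0 mul0r.
Qed.

Lemma taylor_boundedX j : taylor_bounded 'X_j.
Proof.
split; rewrite ?mevalXU //.
  by move=> i; rewrite meval_mderivX; case: (j == i); rewrite ?(vge1 hv) ?vge0.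
rewrite /taylor_rem !mevalXU (bigD1 j) //= meval_mderivX eqxx mul1r big1.
  by rewrite addr0 addrAC addrK subrr vge0.
by move=> i ne; rewrite meval_mderivX eq_sym (negbTE ne) mul0r.
Qed.

Lemma taylor_bounded_coef p : (forall m, ge p@_m 0) -> taylor_bounded p.
Proof.
move=> hp; rewrite (mpolyE p); elim/big_ind: _ => //.
- by rewrite -mpolyC0; exact: taylor_boundedC (vge0 le v 0).
- exact: taylor_boundedD.
move=> m _; rewrite -mul_mpolyC mpolyXE_id.
apply: taylor_boundedM; first exact: taylor_boundedC.
elim/big_ind: _ => //; [|exact: taylor_boundedM|].
  by rewrite -mpolyC1; exact: taylor_boundedC (vge1 hv).
move=> i _; elim: (m i) => [|k ih]; rewrite ?expr0 -?mpolyC1.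
  exact: taylor_boundedC (vge1 hv).
by rewrite exprS; exact: taylor_boundedM (taylor_boundedX i) ih.
Qed.

Lemma vge_meval_sub p : (forall m, ge p@_m 0) ->
  ge (p.@[fun i => x i + h i] - p.@[x]) g.
Proof.
case/taylor_bounded_coef => _ hd hT; rewrite taylor_remE.
rewrite (_ : _ + _ + _ - _ =
  \sum_(i < N) (mderiv i p).@[x] * h i + taylor_rem p); last by ring.
exact: (vgeD hv (vge_linear_term hd) (vge_mono hv (oag_le_double ho hg) hT)).
Qed.

End Taylor.

Lemma vge0_meval (K : fieldType) (G : zmodType) (le : rel G) (v : K -> G)
    (N : nat) (p : {mpoly K[N]}) (x : 'I_N -> K) :
  is_valuation le v -> (forall m, vge le v p@_m 0) ->
  (forall i, vge le v (x i) 0) -> vge le v p.@[x] 0.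
Proof.
move=> hv hp hx.
by case: (taylor_bounded_coef hv (h := fun=> 0) (oag_refl (valuation_oag hv) 0) hx
  (fun=> vge0 le v 0) hp).
Qed.

Section Derivation.
Variables (K : fieldType) (G : zmodType) (le : rel G) (v : K -> G) (D : K -> K).
Hypotheses (hv : is_valuation le v) (hD : is_VD le v D).
Local Notation ge := (vge le v).
Local Notation gt := (vgt le v).
Let ho := valuation_oag hv.

Lemma VD_additive a b : D (a + b) = D a + D b.
Proof. by case: hD => h _ _ _; exact: h. Qed.

Lemma VD0 : D 0 = 0.
Proof. by apply: (addrI (D 0)); rewrite -VD_additive !addr0. Qed.

Lemma iterD_add i a b : iter i D (a + b) = iter i D a + iter i D b.
Proof. by elim: i => //= i ->; rewrite VD_additive. Qed.

Lemma vge_D a g : ge a g -> ge (D a) g.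
Proof.
have [->|na] := eqVneq a 0; first by rewrite VD0.
rewrite vgeE // => h; case: hD => _ /(_ a) /orP[/eqP->|/andP[_ h2]] _ _.
  exact: vge0.
by rewrite /vge (oag_trans ho h h2) orbT.
Qed.

Lemma vgt_D a g : gt a g -> gt (D a) g.
Proof.
have [->|na] := eqVneq a 0; first by rewrite VD0.
rewrite vgtE // => h; case: hD => _ /(_ a) /orP[/eqP->|/andP[_ h2]] _ _.
  exact: vgt0.
by rewrite /vgt (oag_lt_le_trans ho h h2) orbT.
Qed.

Lemma vge_iterD i a g : ge a g -> ge (iter i D a) g.
Proof. by move=> h; elim: i => //= i; exact: vge_D. Qed.

Lemma exists_vgt_D g : exists t : K, [/\ t != 0, v t = g & gt (D t) g].
Proof.
have [a na <-] := v_surj hv g.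
case: hD => _ _ /(_ a na) [t [nt <- /andP[_ hDt]]] _.
by exists t; split => //; rewrite /vgt.
Qed.

(* The Leibniz rule (VDF3) makes t D^i x the leading part of D^i(t x). *)
Lemma vgt_iterD_mul_sub t x i : gt (D t) (v t) -> vring le v x ->
  gt (iter i D (t * x) - t * iter i D x) (v t).
Proof.
move=> hDt hx; case: hD => _ _ _ [e he hDM].
elim: i => [|i ih]; first by rewrite /= subrr vgt0.
set y := iter i D x; set r := iter i D (t * x) - t * y.
have hy : ge y 0 by exact: vge_iterD.
have -> : iter i.+1 D (t * x) = D (t * y + r) by rewrite /r addrC subrK.
rewrite VD_additive hDM.
have -> : t * D y + y * D t + e * D t * D y + D r - t * D y
    = y * D t + e * D t * D y + D r by ring.
apply: (vgtD hv); last exact: vgt_D.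
apply: (vgtD hv); first by rewrite -[v t]add0r; exact: (vge_gtM hv).
rewrite -[v t]addr0; apply: (vgt_geM hv); last exact: vge_D.
by rewrite -[v t]add0r; exact: (vge_gtM hv).
Qed.

End Derivation.

Section Newton.
Variables (K : fieldType) (G : zmodType) (le : rel G) (v : K -> G) (D : K -> K).
Hypotheses (hv : is_valuation le v) (hD : is_VD le v D)
  (hres : residue_linearly_D_closed le v D).
Variables (n : nat) (f : {mpoly K[n.+1]}) (b : K) (gamma : G) (i0 : 'I_n.+1).
Hypotheses (hf : forall m, vring le v f@_m) (hb : vring le v b)
  (hgmin : forall i : 'I_n.+1, vge le v (mderiv i f).@[jet D n b] gamma)
  (hd0 : (mderiv i0 f).@[jet D n b] != 0)
  (hvd : v (mderiv i0 f).@[jet D n b] = gamma).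

Local Notation ge := (vge le v).
Local Notation gt := (vgt le v).
Local Notation lt := (lt_ le).
Local Notation F c := (f.@[jet D n c]).
Local Notation d := ((mderiv i0 f).@[jet D n b]).
Let ho := valuation_oag hv.

Lemma vge0_mderiv_coef i m : ge (mderiv i f)@_m 0.
Proof. by rewrite mcoeff_deriv; apply: (vge_muln hv); exact: hf. Qed.

Lemma vge0_jet c i : ge c 0 -> ge (jet D n c i) 0.
Proof. exact: (vge_iterD hv hD). Qed.

Lemma jet_split c a : jet D n c =1 (fun i => jet D n a i + jet D n (c - a) i).
Proof. by move=> i; rewrite /jet -(iterD_add hD) // addrC subrK. Qed.

Lemma gamma_ge0 : le 0 gamma.
Proof.
have := vge0_meval hv (vge0_mderiv_coef i0) (fun i => vge0_jet i hb).
by rewrite vgeE // hvd.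
Qed.

Lemma vge0_near c : gt (c - b) gamma -> ge c 0.
Proof.
move=> h; rewrite -(subrK b c); apply: (vgeD hv) => //.
exact: (vge_mono hv gamma_ge0 (vgtW h)).
Qed.

Lemma vgt_mderiv_sub c i : gt (c - b) gamma ->
  gt ((mderiv i f).@[jet D n c] - (mderiv i f).@[jet D n b]) gamma.
Proof.
have [->|ncb] := eqVneq c b; first by move=> _; rewrite subrr vgt0.
rewrite -subr_eq0 in ncb; rewrite vgtE // => hlt.
apply: (vge_gt hv hlt); rewrite (meval_eq _ (jet_split c b)).
have hg := oag_trans ho gamma_ge0 (oag_ltW hlt).
apply: (vge_meval_sub hv hg) (vge0_mderiv_coef i).
- by move=> j; exact: vge0_jet.
- by move=> j; exact: (vge_iterD hv hD j (vge_v hv _)).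
Qed.

Lemma vge_mderiv c i : gt (c - b) gamma -> ge (mderiv i f).@[jet D n c] gamma.
Proof.
move=> hc; rewrite -(subrK (mderiv i f).@[jet D n b] (mderiv i f).@[jet D n c]).
exact: (vgeD hv (vgtW (vgt_mderiv_sub i hc)) (hgmin i)).
Qed.

Lemma jet_taylor c z g : le 0 g -> ge c 0 -> ge (z - c) g ->
  exists2 T, ge T (g + g) &
    F z = F c + \sum_(i < n.+1) (mderiv i f).@[jet D n c] * jet D n (z - c) i + T.
Proof.
move=> hg hc hzc; rewrite (meval_eq _ (jet_split z c)).
have [_ _ hT] := taylor_bounded_coef hv hg (fun i => vge0_jet i hc)
  (fun i => vge_iterD hv hD i hzc) hf.
by exists (taylor_rem (jet D n c) (jet D n (z - c)) f) => //; rewrite taylor_remE.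
Qed.

Definition newton_coef c (i : 'I_n.+1) : K := (mderiv i f).@[jet D n c] / d.

Lemma vring_newton_coef c i : gt (c - b) gamma -> vring le v (newton_coef c i).
Proof. by move=> hc; apply: (vge0_div hv hd0); rewrite hvd; exact: vge_mderiv. Qed.

Lemma newton_coef_unit c : gt (c - b) gamma -> ~~ videal le v (newton_coef c i0).
Proof.
move=> hc; apply/negP => hI.
have hu : gt (((mderiv i0 f).@[jet D n c] - d) / d) 0.
  by apply: (vgt0_div hv hd0); rewrite hvd; exact: vgt_mderiv_sub.
have : gt 1 0.
  rewrite (_ : 1 = newton_coef c i0 - ((mderiv i0 f).@[jet D n c] - d) / d).
    exact: (vgtB hv hI hu).
  by rewrite /newton_coef; field.
by rewrite vgtE ?oner_eq0 // (v1 hv) oag_ltxx.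
Qed.

Lemma lt_gamma_excess a : lt (gamma + gamma) a -> lt gamma (a - gamma).
Proof. by move=> h; have := oag_ltDr ho (- gamma) h; rewrite addrK. Qed.

Lemma newton_correction c t x0 :
  gt (c - b) gamma -> lt (gamma + gamma) (v (F c)) ->
  t != 0 -> v t = v (F c) - gamma -> gt (D t) (v t) -> vring le v x0 ->
  videal le v (\sum_(i < n.+1) newton_coef c i * iter i D x0 - - F c / (t * d)) ->
  gt (F (c + t * x0)) (v (F c)).
Proof.
move=> hc hFc nt vt hDt hx0 hL.
have hlt := lt_gamma_excess hFc; rewrite -vt in hlt.
have hg : le 0 (v t) := oag_trans ho gamma_ge0 (oag_ltW hlt).
have Et : v (F c) = gamma + v t by rewrite vt addrC subrK.
have vtd : v (t * d) = v (F c) by rewrite (vM hv) // hvd addrC -Et.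
have Ec : c + t * x0 - c = t * x0 by rewrite addrC addKr.
have htx : ge (c + t * x0 - c) (v t).
  by rewrite Ec; exact: (vgeM_ge0r hv (oag_refl ho 0) (vge_v hv t) hx0).
have [T hT ->] := jet_taylor hg (vge0_near hc) htx.
rewrite Ec; set S := \sum_(i < n.+1) newton_coef c i * iter i D x0.
pose r i := jet D n (t * x0) i - t * iter i D x0.
have hr i : gt (r i) (v t) by exact: (vgt_iterD_mul_sub hv hD).
have -> : \sum_(i < n.+1) (mderiv i f).@[jet D n c] * jet D n (t * x0) i
    = t * d * S + \sum_(i < n.+1) (mderiv i f).@[jet D n c] * r i.
  rewrite (big_distrr (t * d)) -big_split /=; apply: eq_bigr => i _.
  by rewrite /r /newton_coef; field.
have -> : F c + (t * d * S + \sum_(i < n.+1) (mderiv i f).@[jet D n c] * r i) + T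
    = t * d * (S - - F c / (t * d))
      + \sum_(i < n.+1) (mderiv i f).@[jet D n c] * r i + T.
  by field; apply/andP; split.
apply: (vgtD hv); first apply: (vgtD hv).
- by rewrite -[v (F c)]addr0 -vtd; exact: (vge_gtM hv (vge_v hv _) hL).
- apply: (vgt_sum hv) => i; rewrite Et.
  exact: (vge_gtM hv (vge_mderiv i hc) (hr i)).
- by apply: (vge_gt hv) hT; rewrite Et; exact: (oag_ltDr ho).
Qed.

Lemma newton_step c : gt (c - b) gamma -> lt (gamma + gamma) (v (F c)) ->
  exists c', [/\ gt (c' - b) gamma, gt (F c') (v (F c))
               & ge (c' - c) (v (F c) - gamma)].
Proof.
move=> hc hFc; have [t [nt vt hDt]] := exists_vgt_D hv hD (v (F c) - gamma).
have hy : vring le v (- F c / (t * d)).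
  apply: (vge0_div hv); first by rewrite mulf_neq0.
  by rewrite (vM hv) // vt hvd subrK (vgeN hv) (vge_v hv).
have [x0 hx0 hL] := hres (fun i => vring_newton_coef i hc)
  (ex_intro _ i0 (newton_coef_unit hc)) hy.
have htx : ge (t * x0) (v (F c) - gamma).
  by rewrite -vt; exact: (vgeM_ge0r hv (oag_refl ho 0) (vge_v hv t) hx0).
exists (c + t * x0); split.
- rewrite addrAC; apply: (vgtD hv hc).
  exact: (vge_gt hv (lt_gamma_excess hFc) htx).
- by apply: newton_correction; rewrite ?vt.
- by rewrite addrC addKr.
Qed.

Definition approx c := gt (c - b) gamma && lt (gamma + gamma) (v (F c)).

Definition refines s t := le (v (F s)) (v (F t)) && ge (t - s) (v (F s) - gamma).

Lemma refines_refl s : refines s s.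
Proof. by rewrite /refines (oag_refl ho) subrr vge0. Qed.

Lemma refines_trans r s t : refines r s -> refines s t -> refines r t.
Proof.
case/andP=> h1 h2 /andP[h3 h4]; apply/andP; split; first exact: (oag_trans ho h1 h3).
rewrite -(subrK s t) -addrA; apply: (vgeD hv) h2.
by apply: (vge_mono hv) h4; exact: (oag_leDr ho).
Qed.

Lemma refines_ball_sub s t : refines s t ->
  {subset ball v t (le (v (F t) - gamma)) <= ball v s (le (v (F s) - gamma))}.
Proof.
case/andP=> hst hts x; rewrite -!topredE /= !ball_le => hx.
rewrite -(subrK t x) -addrA; apply: (vgeD hv) hts.
by apply: (vge_mono hv) hx; exact: (oag_leDr ho).
Qed.

Lemma approx_refines_ball s z : approx s -> ge (z - s) (v (F s) - gamma) ->
  gt (z - b) gamma /\ ge (F z) (v (F s)).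
Proof.
case/andP=> hs hFs hz; set g := v (F s) - gamma.
have Es : v (F s) = gamma + g by rewrite /g addrC subrK.
have hlt : lt gamma g by have := oag_ltDr ho (- gamma) hFs; rewrite addrK.
have hg : le 0 g := oag_trans ho gamma_ge0 (oag_ltW hlt).
split; first by rewrite -(subrK s z) -addrA; exact: (vgtD hv (vge_gt hv hlt hz) hs).
have [T hT ->] := jet_taylor hg (vge0_near hs) hz.
apply: (vgeD hv); first apply: (vgeD hv).
- exact: (vge_v hv).
- apply: (vge_sum hv) => i; rewrite Es.
  exact: (vgeM hv (vge_mderiv i hs) (vge_iterD hv hD i hz)).
- by apply: (vge_mono hv) hT; rewrite Es; exact: (oag_leDr ho g (oag_ltW hlt)).
Qed.

Section Maximal.
Hypotheses (hsc : spherically_complete le v)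
  (hfb : gt (F b) (gamma + gamma))
  (no_root : forall a, gt (a - b) gamma -> F a != 0).

Lemma chain_upper_bound (A : {c | approx c} -> Prop) s0 : A s0 ->
  (forall s t, A s -> A t -> refines (val s) (val t) \/ refines (val t) (val s)) ->
  exists m : {c | approx c}, forall s, A s -> refines (val s) (val m).
Proof.
move=> As0 Atot.
have [z hz] : exists z, forall i : {s | A s},
    ball v (val (sval i)) (le (v (F (val (sval i))) - gamma)) z.
  apply: (hsc (L := fun i => le (v (F (val (sval i))) - gamma))) => [i|i j].
    split; first by exists (v (F (val (sval i))) - gamma); exact: (oag_refl ho).
    by move=> g1 g2; exact: (oag_trans ho).
  have [] := Atot _ _ (proj2_sig i) (proj2_sig j) => h; [right|left];
    exact: refines_ball_sub.
have hzs s : A s -> ge (z - val s) (v (F (val s)) - gamma).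
  by move=> As; rewrite -ball_le; exact: (hz (exist _ s As)).
have hle s : A s -> le (v (F (val s))) (v (F z)).
  move=> As; have [hzb] := approx_refines_ball (valP s) (hzs _ As).
  by rewrite vgeE // no_root.
have approx_z : approx z.
  have [hzb _] := approx_refines_ball (valP s0) (hzs _ As0).
  case/andP: (valP s0) => _ h; rewrite /approx hzb.
  exact: (oag_lt_le_trans ho h (hle _ As0)).
exists (exist _ z approx_z) => s As.
by apply/andP; split; [exact: hle | exact: hzs].
Qed.

Lemma no_root_absurd : False.
Proof.
have approx_b : approx b.
  have hbb : gt (b - b) gamma by rewrite subrr vgt0.
  by rewrite /approx hbb -vgtE // no_root.
have chain (A : classical_sets.set {c | approx c}) :
    classical_sets.total_on A (fun s t => refines (val s) (val t)) ->
    exists m : {c | approx c}, forall s, A s -> refines (val s) (val m).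
  move=> Atot; have [[s0 As0]|nA] := classic (exists s, A s).
    exact: chain_upper_bound As0 Atot.
  by exists (exist _ b approx_b) => s As; case: nA; exists s.
have [m mmax] := classical_sets.ZL_preorder (exist _ b approx_b)
  (fun s => refines_refl (val s))
  (fun r s t => @refines_trans (val r) (val s) (val t)) chain.
case/andP: (valP m) => hmb hmF.
have [c [hcb hFc hcm]] := newton_step hmb hmF.
have ltFc : lt (v (F (val m))) (v (F c)) by rewrite -vgtE // no_root.
have approx_c : approx c.
  by rewrite /approx hcb (oag_lt_le_trans ho hmF (oag_ltW ltFc)).
have hmc : refines (val m) c by rewrite /refines (oag_ltW ltFc) hcm.
have /andP[hcm' _] := mmax (exist _ c approx_c) hmc.
exact: (oag_le_ltF ho hcm' ltFc).
Qed.

End Maximal.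

End Newton.

Theorem theorem5 (K : fieldType) (G : zmodType) (le : rel G) (v : K -> G)
  (D : K -> K)
  (hv : is_valuation le v)
  (hD : is_VD le v D)
  (hsc : spherically_complete le v)
  (hres : residue_linearly_D_closed le v D)
  (n : nat) (f : {mpoly K[n.+1]})
  (hf : forall m, vring le v f@_m)
  (b : K) (hb : vring le v b)
  (gamma : G)
  (hgmin : forall i : 'I_n.+1,
     vge le v (mderiv i f).@[jet D n b] gamma)
  (hgatt : exists i : 'I_n.+1,
     ((mderiv i f).@[jet D n b] != 0) /\ v (mderiv i f).@[jet D n b] = gamma)
  (hfb : vgt le v f.@[jet D n b] (gamma + gamma)) :
  exists a : K, f.@[jet D n a] = 0 /\ vgt le v (a - b) gamma.
Proof.
have [i0 [hd0 hvd]] := hgatt.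
apply: NNPP => hno; apply: (no_root_absurd hv hD hres hf hb hgmin hd0 hvd hsc hfb).
by move=> a hab; apply/eqP => hFa; apply: hno; exists a.
Qed.
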